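(* Let $G\in\{GL_n,SO_{2n+1},Sp_{2n},SO_{2n}\}$, $I\subseteq\Sigma_G^+$, and let $\lambda,\mu\in\mathcal P_n$ with $|\lambda|\ge|\mu|$. Then for every integer $k\ge\frac{|\lambda|-|\mu|}{2}$: $$\widetilde K^{G,I}_{\lambda,\mu}(q)=K^{G,I}_{\lambda+k\kappa,\mu+k\kappa}(q)\quad\text{if }G=GL_n,Sp_{2n},SO_{2n},\qquad \widetilde K^{SO_{2n+1},I}_{\lambda,\mu}(q)=\mathcal K^{SO_{2n+1},I}_{\lambda+k\kappa,\mu+k\kappa}(q).$$
   Context: Notation: $|\beta|=\sum_i\beta_i$; $\kappa=(1,\dots,1)\in\mathbb N^n$; $\rho=(n,\dots,1)$; $\mathcal P_n$ = nonincreasing $n$-tuples of nonnegative integers. $\varepsilon_1,\dots,\varepsilon_n$ is the standard basis of $\mathbb R^n$, and $e^\beta=x^\beta=x_1^{\beta_1}\cdots x_n^{\beta_n}$. Positive roots: $R^+_{GL_n}=\{\varepsilon_i-\varepsilon_j:i<j\}$; $R^+_{SO_{2n+1}}=\{\varepsilon_i\pm\varepsilon_j:i<j\}\cup\{\varepsilon_i\}$; $R^+_{Sp_{2n}}=\{\varepsilon_i\pm\varepsilon_j:i<j\}\cup\{2\varepsilon_i\}$; $R^+_{SO_{2n}}=\{\varepsilon_i\pm\varepsilon_j:i<j\}$. Simple roots $\Sigma_G^+$: $\alpha_i=\varepsilon_i-\varepsilon_{i+1}$ ($1\le i\le n-1$), plus for $SO_{2n+1}$: $\alpha_n=\varepsilon_n$,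 for $Sp_{2n}$: $\alpha_n=2\varepsilon_n$, for $SO_{2n}$: $\alpha_n=\varepsilon_{n-1}+\varepsilon_n$. $W_G$: $S_n$ (permutations of coordinates, $(\sigma\beta)_i=\beta_{\sigma(i)}$) for $GL_n$; all signed permutations for $SO_{2n+1},Sp_{2n}$; signed permutations with an even number of sign changes for $SO_{2n}$; $(-1)^{\ell(w)}=\det w$. $\rho_G$: $\rho_{GL_n}=\rho$, $\rho_{SO_{2n+1}}=(n-\frac12,\dots,\frac12)$, $\rho_{Sp_{2n}}=(n,\dots,1)$, $\rho_{SO_{2n}}=(n-1,\dots,0)$; dot action $w\circ\beta=w(\beta+\rho_G)-\rho_G$. For $I\subseteq\Sigma_G^+$, let $R^+_{G,I}$ be the set of positive roots lying in the $\mathbb Z$-span of $I$ and $S_{G,I}=R^+_G\setminus R^+_{G,I}$. Define $\mathcal P_q^{G,I}$ by $\prod_{\alpha\in S_{G,I}}(1-qe^\alpha)^{-1}=\sum_\beta\mathcal P^{G,I}_q(\beta)e^\beta$, and for $SO_{2n+1}$ define $\mathcal P^{SO_{2n+1},I}_{q,h}$ by $\prod_{\alpha\in S_{SO_{2n+1},I}}(1-q^{h(\alpha)}e^\alpha)^{-1}=\sum_\beta\mathcal P^{SO_{2n+1},I}_{q,h}(\beta)e^\beta$ where $h(\varepsilon_i)=2$ and $h(\alpha)=1$ for other roots. For $\lambda,\mu\in\mathbb Z^n$: $K^{G,I}_{\lambda,\mu}(q)=\sum_{w\in W_G}(-1)^{\ell(w)}\mathcal P^{G,I}_q(w\circ\lambda-\mu)$;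 $\mathcal K^{SO_{2n+1},I}_{\lambda,\mu}(q)=\sum_{w\in W_G}(-1)^{\ell(w)}\mathcal P^{SO_{2n+1},I}_{q,h}(w\circ\lambda-\mu)$; and the stable limit $\widetilde K^{G,I}_{\lambda,\mu}(q)=\sum_{\sigma\in S_n}(-1)^{\ell(\sigma)}\mathcal P^{G,I}_q(\sigma\circ\lambda-\mu)$ for $G=GL_n,Sp_{2n},SO_{2n}$, and $\widetilde K^{SO_{2n+1},I}_{\lambda,\mu}(q)=\sum_{\sigma\in S_n}(-1)^{\ell(\sigma)}\mathcal P^{SO_{2n+1},I}_{q,h}(\sigma\circ\lambda-\mu)$. *)

From HB Require Import structures.
From mathcomp Require Import all_boot all_order all_algebra all_fingroup.
From Stdlib Require Import ClassicalDescription.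
Set Implicit Arguments. Unset Strict Implicit. Unset Printing Implicit Defensive.
Import Order.TTheory GRing.Theory Num.Theory.
Local Open Scope ring_scope.

Inductive gtype := GL | SOodd | Sp | SOeven.

(* weights: integer vectors in Z^n, indexed by 'I_n (coordinate i is 0-indexed) *)
Definition weight (n : nat) := {ffun 'I_n -> int}.

Definition eps n (i : 'I_n) : weight n := [ffun j => ((i == j) : nat)%:Z].

Definition kkappa n (k : int) : weight n := [ffun _ => k].

Definition wsize n (b : weight n) : int := \sum_i b i.

Definition is_partition n (b : weight n) : Prop :=
  (forall i, 0 <= b i) /\ (forall i j : 'I_n, (i <= j)%N -> b j <= b i).

Definition pos_roots (G : gtype) (n : nat) : seq (weight n) :=
  [seq eps i - eps j | i : 'I_n <- enum 'I_n, j : 'I_n <- [seq j : 'I_n <- enum 'I_n | (i < j)%N]] ++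
  (if G is GL then [::]
   else [seq eps i + eps j | i : 'I_n <- enum 'I_n, j : 'I_n <- [seq j : 'I_n <- enum 'I_n | (i < j)%N]]) ++
  match G with
  | SOodd => [seq eps i | i : 'I_n <- enum 'I_n]
  | Sp => [seq eps i *+ 2 | i : 'I_n <- enum 'I_n]
  | _ => [::]
  end.

(* simple roots Sigma^+_G:  alpha_i = eps_i - eps_{i+1} (1 <= i <= n-1), plus
   alpha_n = eps_n (SO_{2n+1}), 2 eps_n (Sp_{2n}), eps_{n-1} + eps_n (SO_{2n}) *)
Definition simple_roots (G : gtype) (n : nat) : seq (weight n) :=
  [seq eps i - eps j | i : 'I_n <- enum 'I_n, j : 'I_n <- [seq j : 'I_n <- enum 'I_n | j == i.+1 :> nat]] ++
  match G with
  | GL => [::]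
  | SOodd => [seq eps i | i : 'I_n <- [seq i : 'I_n <- enum 'I_n | i.+1 == n]]
  | Sp => [seq eps i *+ 2 | i : 'I_n <- [seq i : 'I_n <- enum 'I_n | i.+1 == n]]
  | SOeven => [seq eps i + eps j | i : 'I_n <- [seq i : 'I_n <- enum 'I_n | i.+2 == n],
                                   j : 'I_n <- [seq j : 'I_n <- enum 'I_n | j.+1 == n]]
  end.

Definition in_Zspan n (I : seq (weight n)) (a : weight n) : Prop :=
  exists c : weight n -> int, a = \sum_(x <- I) x *~ c x.

Definition decP (P : Prop) : bool :=
  if excluded_middle_informative P then true else false.

(* S_{G,I} = R^+_G \ R^+_{G,I} *)
Definition S_GI (G : gtype) n (I : seq (weight n)) : seq (weight n) :=
  [seq a <- pos_roots G n | ~~ decP (in_Zspan I a)].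

(* the linear form <rho, .>; it is >= 1 on every positive root of every G,
   so any solution of sum_j m_j alpha_j = beta (alpha_j positive) has
   m_j <= sum_j m_j <= phi beta; this bounds the multiplicities below. *)
Definition phi n (b : weight n) : int := \sum_(i : 'I_n) (n - i)%N%:Z * b i.

(* Coefficient of e^beta in prod_{alpha in S} (1 - q^{h alpha} e^alpha)^{-1},
   i.e. sum over multiplicity functions m : S -> N with sum_alpha m_alpha alpha = beta
   of q^{sum_alpha m_alpha h(alpha)}  (multiplicities bounded as explained above). *)
Definition kpf n (S : seq (weight n)) (h : weight n -> nat) (b : weight n) : {poly int} :=
  \sum_(m : {ffun 'I_(size S) -> 'I_(`|phi b|%N.+1)}
         | \sum_(j < size S) (nth (0%R : weight n) S j) *~ ((m j : nat) : int) == b)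
    'X^(\sum_(j < size S) (m j : nat) * h (nth (0%R : weight n) S j))%N.

Definition h_one n (_ : weight n) : nat := 1%N.
Definition h_SO n (a : weight n) : nat := if [exists i, a == eps i] then 2%N else 1%N.

Definition Pq (G : gtype) n (I : seq (weight n)) (b : weight n) : {poly int} :=
  kpf (S_GI G I) (@h_one n) b.
Definition Pqh n (I : seq (weight n)) (b : weight n) : {poly int} :=
  kpf (S_GI SOodd I) (@h_SO n) b.

(* signed permutations w = (sigma, s): (w beta)_i = (-1)^{s_i} beta_{sigma(i)} *)
Definition sperm n := ('S_n * {ffun 'I_n -> bool})%type.
Definition sact n (w : sperm n) (b : weight n) : weight n :=
  [ffun i => (-1) ^+ (w.2 i) * b (w.1 i)].
(* (-1)^{l(w)} = det w *)
Definition ssign n (w : sperm n) : int :=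
  (-1) ^+ (odd_perm w.1) * (-1) ^+ #|[pred i | w.2 i]|.
Definition no_flip n (w : sperm n) : bool := [forall i, ~~ w.2 i].
Definition inW (G : gtype) n (w : sperm n) : bool :=
  match G with
  | GL => no_flip w
  | SOeven => ~~ odd #|[pred i | w.2 i]|
  | _ => true
  end.

(* 2 rho_G (integral) *)
Definition rho2 (G : gtype) n : weight n :=
  [ffun i : 'I_n => match G with
                    | GL | Sp => ((n - i)%N.*2)%:Z
                    | SOodd => ((n - i)%N.*2)%:Z - 1
                    | SOeven => ((n - i.+1)%N.*2)%:Z
                    end].

(* dot action w o beta = w(beta + rho_G) - rho_G = w beta + (w(2 rho_G) - 2 rho_G)/2
   (the last division by 2 is exact coordinatewise) *)
Definition dot (G : gtype) n (w : sperm n) (b : weight n) : weight n :=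
  sact w b + [ffun i => ((sact w (rho2 G n) - rho2 G n) i %/ 2)%Z].

Definition Kq (G : gtype) n (I : seq (weight n)) (lam mu : weight n) : {poly int} :=
  \sum_(w : sperm n | inW G w) ssign w *: Pq G I (dot G w lam - mu).
Definition calKq n (I : seq (weight n)) (lam mu : weight n) : {poly int} :=
  \sum_(w : sperm n | inW SOodd w) ssign w *: Pqh I (dot SOodd w lam - mu).
(* stable limits (sum over S_n only) *)
Definition Ktilde (G : gtype) n (I : seq (weight n)) (lam mu : weight n) : {poly int} :=
  \sum_(w : sperm n | no_flip w) ssign w *: Pq G I (dot G w lam - mu).
Definition Ktilde_h n (I : seq (weight n)) (lam mu : weight n) : {poly int} :=
  \sum_(w : sperm n | no_flip w) ssign w *: Pqh I (dot SOodd w lam - mu).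

From HB Require Import structures.
From mathcomp Require Import all_boot all_order all_algebra all_fingroup.
From mathcomp Require Import zify ring lra.
Import Order.TTheory GRing.Theory Num.Theory.
Local Open Scope ring_scope.

(* Every root in S_{G,I} is positive, hence has nonnegative coordinate sum, so
   the partition functions vanish at weights b with |b| < 0.  For w in S_n the
   shift by k kappa cancels in w o (lam + k kappa) - (mu + k kappa).  Any other
   w in W_G changes the sign of a coordinate j with rho_G(j) > 0 (for SO_{2n}
   at least two signs change, and rho_G vanishes only at the last coordinate),
   and then |w o (lam + k kappa) - (mu + k kappa)| <= |lam| - |mu| - 2k - 1 < 0. *)

Lemma wsize0 n : wsize (0 : weight n) = 0.
Proof. by rewrite /wsize big1 // => i _; rewrite ffunE. Qed.

Lemma wsizeD n (a b : weight n) : wsize (a + b) = wsize a + wsize b.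
Proof. by rewrite /wsize -big_split; apply: eq_bigr => i _; rewrite ffunE. Qed.

HB.instance Definition _ n :=
  GRing.isNmodMorphism.Build (weight n) int (@wsize n) (@wsize0 n, @wsizeD n).

Lemma wsize_eps n (i : 'I_n) : wsize (eps i) = 1.
Proof.
rewrite /wsize (bigD1 i) //= big1 => [|j ji]; rewrite ffunE ?eqxx ?addr0 //.
by rewrite eq_sym (negbTE ji).
Qed.

Lemma pos_roots_wsize_ge0 G n (a : weight n) : a \in pos_roots G n -> 0 <= wsize a.
Proof.
rewrite /pos_roots !mem_cat => /or3P [/allpairsPdep [i [j [_ _ ->]]]||].
- by rewrite raddfB /= !wsize_eps subrr.
- by case: G => //= /allpairsPdep [i [j [_ _ ->]]]; rewrite raddfD /= !wsize_eps.
- by case: G => //= /mapP [i _ ->]; rewrite ?raddfMn /= wsize_eps.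
Qed.

Lemma kpf_eq0 n (S : seq (weight n)) h (b : weight n) :
  {in S, forall a, 0 <= wsize a} -> wsize b < 0 -> kpf S h b = 0.
Proof.
move=> S_ge0 b_lt0; rewrite /kpf big_pred0 // => m; apply/negbTE/eqP => Em.
move: b_lt0; rewrite -Em raddf_sum ltNge => /negP; apply.
by apply: sumr_ge0 => j _; rewrite raddfMz mulrz_ge0 // S_ge0 // mem_nth.
Qed.

Section SignedPermutation.
Variables (n : nat) (w : sperm n).

Lemma sactD : {morph sact w : a b / a + b}.
Proof. by move=> a b; apply/ffunP => i; rewrite !ffunE mulrDr. Qed.

Lemma dotD G (a b : weight n) : dot G w (a + b) = dot G w a + sact w b.
Proof. by rewrite /dot sactD addrAC. Qed.

Lemma sact_kkappa k : no_flip w -> sact w (kkappa n k) = kkappa n k.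
Proof. by move/forallP => nf; apply/ffunP => i; rewrite !ffunE (negbTE (nf i)) mul1r. Qed.

Lemma wsize_sact (b : weight n) :
  wsize (sact w b) = wsize b - 2 * \sum_(i | w.2 i) b (w.1 i).
Proof.
have -> : wsize b = \sum_i b (w.1 i) by rewrite /wsize (reindex_inj (@perm_inj _ w.1)).
rewrite /wsize (big_mkcond (fun i => w.2 i)) mulr_sumr -sumrB.
apply: eq_bigr => i _; rewrite ffunE.
by case: (w.2 i); rewrite ?mulr0 ?subr0 ?mul1r //= expr1; ring.
Qed.

Lemma wsize_dot_le G (b : weight n) :
  2 * wsize (dot G w b) <=
  2 * wsize b - \sum_(i | w.2 i) (4 * b (w.1 i) + 2 * rho2 G n (w.1 i)).
Proof.
set y := sact w (rho2 G n) - rho2 G n.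
have half_le : 2 * wsize [ffun i => (y i %/ 2)%Z] <= wsize y.
  rewrite /wsize mulr_sumr; apply: ler_sum => i _.
  by rewrite ffunE mulrC; apply: lez_floor.
rewrite /dot raddfD mulrDr (le_trans (lerD (lexx _) half_le)) //.
by rewrite /y raddfB /= !wsize_sact big_split /= -!mulr_sumr; lra.
Qed.

End SignedPermutation.

Lemma rho2_ge0 G n (j : 'I_n) : 0 <= rho2 G n j.
Proof. by rewrite ffunE; have := ltn_ord j; case: G; lia. Qed.

Lemma flipped_rho2_gt0 G n (w : sperm n) : inW G w -> ~~ no_flip w ->
  exists2 i, w.2 i & 0 < rho2 G n (w.1 i).
Proof.
move=> wW; rewrite negb_forall => /existsP [i0]; rewrite negbK => flip0.
have ltn0 := ltn_ord (w.1 i0).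
case: G wW => /= wW.
- by move/forallP: wW => /(_ i0); rewrite flip0.
- by exists i0 => //; rewrite ffunE; lia.
- by exists i0 => //; rewrite ffunE; lia.
have : (0 < #|[predD1 [pred i | w.2 i] & i0]|)%N.
  by move: wW; rewrite (cardD1 i0) inE flip0; case: #|_|.
case/card_gt0P => i1; rewrite !inE => /andP [i1_neq0 flip1].
have ne10 : (w.1 i1 : nat) != w.1 i0.
  by apply: contra i1_neq0 => /eqP/val_inj/perm_inj ->.
have ltn1 := ltn_ord (w.1 i1).
case: (ltnP (w.1 i0).+1 n) => last0.
  by exists i0 => //; rewrite ffunE; lia.
by exists i1 => //; rewrite ffunE; move: ne10; rewrite -eqnE; lia.
Qed.

Lemma wsize_dot_shift_lt0 G n (w : sperm n) (lam mu : weight n) (k : int) :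
  inW G w -> ~~ no_flip w -> (forall i, 0 <= lam i) -> 0 <= k ->
  wsize lam - wsize mu <= 2 * k ->
  wsize (dot G w (lam + kkappa n k) - (mu + kkappa n k)) < 0.
Proof.
move=> wW nf lam_ge0 k_ge0 hk.
have [i0 flip0 rho0] := flipped_rho2_gt0 _ _ _ wW nf.
have lamkE j : (lam + kkappa n k) j = lam j + k by rewrite !ffunE.
have := wsize_dot_le _ w G (lam + kkappa n k); rewrite raddfB !raddfD /=.
under eq_bigr do rewrite lamkE.
set flips := \sum_(i < n | _) _; have : 4 * k + 2 <= flips.
  rewrite /flips (bigD1 i0) //= -[X in X <= _]addr0 lerD //.
    by have := lam_ge0 (w.1 i0); lia.
  by apply: sumr_ge0 => i _; have := lam_ge0 (w.1 i); have := rho2_ge0 G n (w.1 i); lia.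
by lia.
Qed.

Lemma alternating_sum_stable G n (V : lmodType int) (P : weight n -> V)
    (lam mu : weight n) (k : int) :
  (forall b, wsize b < 0 -> P b = 0) ->
  (forall i, 0 <= lam i) -> 0 <= k -> wsize lam - wsize mu <= 2 * k ->
  \sum_(w : sperm n | no_flip w) ssign w *: P (dot G w lam - mu) =
  \sum_(w : sperm n | inW G w)
     ssign w *: P (dot G w (lam + kkappa n k) - (mu + kkappa n k)).
Proof.
move=> P0 lam_ge0 k_ge0 hk.
rewrite [RHS](bigID (@no_flip n)) /= [X in _ + X]big1 ?addr0; last first.
  by move=> w /andP [wW nf]; rewrite P0 ?scaler0 // wsize_dot_shift_lt0.
apply: eq_big => [w | w nf]; last by rewrite dotD sact_kkappa // opprD addrACA subrr addr0.
case nf: (no_flip w); rewrite ?andbT ?andbF //.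
by case: G => //=; move/forallP: nf => nf; rewrite (eq_card0 (fun i => negbTE (nf i))).
Qed.

Theorem mainTheorem2 (G : gtype) (n : nat) (I : seq (weight n))
    (lam mu : weight n) (k : int) :
  {subset I <= simple_roots G n} ->
  is_partition lam -> is_partition mu ->
  wsize mu <= wsize lam ->
  wsize lam - wsize mu <= 2 * k ->
  if G is SOodd then
    Ktilde_h I lam mu = calKq I (lam + kkappa n k) (mu + kkappa n k)
  else
    Ktilde G I lam mu = Kq G I (lam + kkappa n k) (mu + kkappa n k).
Proof.
move=> _ [lam_ge0 _] _ mu_le_lam hk.
have k_ge0 : 0 <= k by lia.
have S_ge0 G' : {in S_GI G' I, forall a, 0 <= wsize a}.
  by move=> a; rewrite mem_filter => /andP [_]; apply: pos_roots_wsize_ge0.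
by case: G => /=; apply: alternating_sum_stable => // b; apply: kpf_eq0.
Qed.
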